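(* Let $G$ be a saturated graph with $mp(G) = k$, and let $H$ be the graph obtained from $G$ by adding a new vertex $v$ adjacent to all vertices of $G$. Then $mp(H) = k+1$ and $H$ is saturated.
   Context: All graphs are finite and simple. A degree monotone path in a graph $G$ is a path $v_1v_2\ldots v_m$ such that $\deg(v_1)\le \cdots\le \deg(v_m)$ or $\deg(v_1)\ge \cdots\ge \deg(v_m)$; its length is its number of vertices. $mp(G)$ denotes the maximum length of a degree monotone path in $G$. A graph $G$ is saturated if $mp(G+e)>mp(G)$ for every pair $e$ of non-adjacent vertices of $G$, where $G+e$ is $G$ with the edge $e$ added. *)

From mathcomp Require Import all_boot.
Set Implicit Arguments. Unset Strict Implicit. Unset Printing Implicit Defensive.

(* A finite simple graph: vertex type T : finType, adjacency e : rel T,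
   assumed symmetric and irreflexive (hypotheses of the theorem). *)

Definition deg (T : finType) (e : rel T) (x : T) : nat := #|[set y | e x y]|.

Definition is_dmp (T : finType) (e : rel T) (p : seq T) : bool :=
  [&& p != [::], uniq p,
      match p with [::] => true | x :: q => path e x q end &
      (sorted (fun a b => deg e a <= deg e b) p
       || sorted (fun a b => deg e a >= deg e b) p)].

(* mp(G): maximum number of vertices of a degree monotone path
   (0 if G has no vertices). A path has at most #|T| vertices. *)
Definition mp (T : finType) (e : rel T) : nat :=
  \max_(n < #|T|.+1 | [exists p : n.-tuple T, is_dmp e p]) n.

Definition add_edge (T : finType) (e : rel T) (x y : T) : rel T :=
  fun a b => [|| e a b, (a == x) && (b == y) | (a == y) && (b == x)].

Definition saturated (T : finType) (e : rel T) : Prop :=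
  forall x y : T, x != y -> ~~ e x y -> mp e < mp (add_edge e x y).

Definition cone (T : finType) (e : rel T) : rel (option T) :=
  fun a b => match a, b with
             | Some x, Some y => e x y
             | None, Some _ | Some _, None => true
             | None, None => false
             end.

From mathcomp Require Import all_boot.
From Stdlib Require Import FunctionalExtensionality.

Set Implicit Arguments. Unset Strict Implicit. Unset Printing Implicit Defensive.

(* In the cone H over G the apex has degree |V(G)|, strictly more than any
   other vertex, so it can be appended at the high-degree end of a longest
   degree monotone path of G: mp(H) >= k+1.  Conversely, if a degree
   monotone path of H passes through the apex, its neighbour on the
   high-degree side has degree at least |V(G)| in H, i.e. it is adjacent to
   every other vertex of G; so the apex can be deleted, leaving a degree
   monotone path of G, and mp(H) = k+1.  Finally H + xy is the cone over
   G + xy, whence mp(H + xy) = mp(G + xy) + 1 > k + 1 by saturation of G. *)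

Lemma map_Some_pmap (A : eqType) (q : seq (option A)) :
  None \notin q -> map Some (pmap id q) = q.
Proof.
move=> None_q; rewrite pmapS_filter map_id; apply/all_filterP/allP => -[x|] //.
by move=> q_None; rewrite q_None in None_q.
Qed.

Definition deg_le (T : finType) (e : rel T) : rel T := fun a b => deg e a <= deg e b.
Definition deg_ge (T : finType) (e : rel T) : rel T := fun a b => deg e a >= deg e b.

Section DegreeMonotonePaths.
Variables (T : finType) (e : rel T).

Lemma is_dmpE p :
  is_dmp e p =
  [&& p != [::], uniq p, sorted e p & sorted (deg_le e) p || sorted (deg_ge e) p].
Proof. by case: p. Qed.

Lemma dmp_size_le_mp p : is_dmp e p -> size p <= mp e.
Proof.
move=> dmp_p; have /card_uniqP size_p : uniq p by case/and4P: dmp_p.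
have lt_p : size p < #|T|.+1 by rewrite ltnS -size_p max_card.
apply: leq_trans (leq_bigmax_cond (Ordinal lt_p) _) => //=.
by apply/existsP; exists (in_tuple p).
Qed.

Lemma mp_le_of_bound n : (forall p, is_dmp e p -> size p <= n) -> mp e <= n.
Proof.
move=> bound_n; apply/bigmax_leqP => i /existsP[t dmp_t].
by rewrite -(size_tuple t); exact: bound_n.
Qed.

Lemma mp_attained : 0 < mp e -> exists2 p, is_dmp e p & size p = mp e.
Proof.
rewrite /mp; case: (pickP (fun n : 'I_#|T|.+1 => [exists p : n.-tuple T, is_dmp e p])).
  move=> i0 dmp_i0; rewrite (bigmax_eq_arg i0 dmp_i0); case: arg_maxnP => //= j.
  by case/existsP=> t dmp_t _ _; exists t; rewrite ?size_tuple.
by move=> no_dmp; rewrite big_pred0.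
Qed.

Hypothesis e_sym : symmetric e.

Lemma is_dmp_rev p : is_dmp e (rev p) = is_dmp e p.
Proof.
rewrite !is_dmpE rev_uniq.
have -> : sorted e (rev p) = sorted e p.
  by rewrite rev_sorted; apply: eq_sorted => x y; rewrite e_sym.
have -> : sorted (deg_le e) (rev p) = sorted (deg_ge e) p := rev_sorted _ _.
have -> : sorted (deg_ge e) (rev p) = sorted (deg_le e) p := rev_sorted _ _.
by rewrite -!size_eq0 size_rev orbC.
Qed.

End DegreeMonotonePaths.

Section Cone.
Variables (T : finType) (e : rel T).
Hypotheses (e_sym : symmetric e) (e_irr : irreflexive e).

Lemma deg_cone_Some x : deg (cone e) (Some x) = (deg e x).+1.
Proof.
rewrite /deg.
have -> : [set y | cone e (Some x) y] = None |: [set Some y | y in [set y | e x y]].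
  by apply/setP => -[y|]; rewrite !inE //= (mem_imset _ _ Some_inj) inE.
rewrite cardsU1 card_imset; last exact: Some_inj.
by rewrite (negPf (introN imsetP _)) //; case.
Qed.

Lemma deg_cone_None : deg (cone e) None = #|T|.
Proof.
rewrite /deg.
have -> : [set y | cone e None y] = [set~ None] by apply/setP => -[y|]; rewrite !inE.
by rewrite cardsC1 card_option.
Qed.

Lemma deg_lt_card x : deg e x < #|T|.
Proof.
rewrite /deg.
have : [set y | e x y] \proper [set: T].
  by apply/properP; split; [exact: subsetT | exists x; rewrite !inE ?e_irr].
by move/proper_card; rewrite cardsT.
Qed.

Lemma adj_of_full_deg x y : #|T| <= (deg e y).+1 -> x != y -> e y x.
Proof.
move=> full_y neq_xy.
have sub_y : [set z | e y z] \subset [set~ y].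
  by apply/subsetP => z; rewrite !inE; apply: contraTneq => ->; rewrite e_irr.
have card_y : #|[set z | e y z]| = #|[set~ y]|.
  apply/eqP; rewrite eqn_leq subset_leq_card // cardsC1.
  by rewrite -ltnS prednK ?full_y // (leq_ltn_trans _ (deg_lt_card y)).
have : x \in [set~ y] by rewrite !inE.
by rewrite -(subset_cardP card_y sub_y) inE.
Qed.

Lemma cone_sym : symmetric (cone e).
Proof. by move=> [x|] [y|] //=; exact: e_sym. Qed.

Lemma sorted_cone_map s : sorted (cone e) (map Some s) = sorted e s.
Proof. by rewrite sorted_map; apply: eq_sorted. Qed.

Lemma sorted_deg_le_cone s : sorted (deg_le (cone e)) (map Some s) = sorted (deg_le e) s.
Proof.
by rewrite sorted_map; apply: eq_sorted => x y; rewrite /relpre /deg_le /= !deg_cone_Some.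
Qed.

Lemma sorted_deg_ge_cone s : sorted (deg_ge (cone e)) (map Some s) = sorted (deg_ge e) s.
Proof.
by rewrite sorted_map; apply: eq_sorted => x y; rewrite /relpre /deg_ge /= !deg_cone_Some.
Qed.

Lemma is_dmp_cone_map p : is_dmp (cone e) (map Some p) = is_dmp e p.
Proof.
rewrite !is_dmpE (map_inj_uniq Some_inj) sorted_cone_map.
by rewrite sorted_deg_le_cone sorted_deg_ge_cone; case: p.
Qed.

Lemma sorted_cone_apex a b :
  sorted (cone e) (map Some a ++ None :: map Some b) = sorted e a && sorted e b.
Proof.
rewrite sorted_cat_cons -sorted_cone_map -(sorted_cone_map b).
have -> : path (cone e) None (map Some b) = sorted (cone e) (map Some b) by case: b.
by case: a => [|x a] //=; rewrite rcons_path last_map andbT.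
Qed.

Lemma dmp_cons_apex p :
  is_dmp e p -> sorted (deg_ge e) p -> is_dmp (cone e) (None :: map Some p).
Proof.
rewrite -is_dmp_cone_map -sorted_deg_ge_cone !is_dmpE => /and4P[_ u_p s_p _] ge_p.
have None_notin : None \notin map Some p by apply/mapP => -[].
case: p None_notin u_p s_p ge_p => [|x p] //= -> -> -> ->.
by rewrite /deg_ge deg_cone_None deg_cone_Some deg_lt_card orbT.
Qed.

Lemma dmp_drop_apex a b :
  is_dmp (cone e) (map Some a ++ None :: map Some b) ->
  sorted (deg_le (cone e)) (map Some a ++ None :: map Some b) ->
  a ++ b != [::] -> is_dmp e (a ++ b).
Proof.
rewrite is_dmpE => /and4P[_ u_ab s_ab _] le_ab ab_nil.
have sub_ab : subseq (map Some (a ++ b)) (map Some a ++ None :: map Some b).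
  by rewrite map_cat; apply: cat_subseq => //; exact: subseq_cons.
have uniq_ab : uniq (a ++ b).
  by rewrite -(map_inj_uniq Some_inj) (subseq_uniq sub_ab u_ab).
have deg_le_trans : transitive (deg_le (cone e)) by move=> y x z; exact: leq_trans.
rewrite is_dmpE ab_nil uniq_ab -sorted_deg_le_cone.
rewrite (subseq_sorted deg_le_trans sub_ab le_ab) andbT /=.
move: s_ab; rewrite sorted_cone_apex => /andP[s_a s_b].
case: b s_b uniq_ab le_ab {ab_nil sub_ab u_ab} => [|y b] s_b uniq_ab le_ab.
  by rewrite cats0.
move: le_ab; rewrite [sorted _ _]sorted_cat_cons => /andP[_ /= /andP[le_Ny _]].
rewrite /deg_le deg_cone_None deg_cone_Some in le_Ny.
move: uniq_ab; rewrite cat_uniq /= => /and3P[_ /norP[y_notin_a _] _].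
rewrite sorted_cat_cons (_ : path e y b) // andbT.
case: a s_a y_notin_a => [|z a] //= s_a y_notin_a; rewrite rcons_path s_a e_sym.
apply: adj_of_full_deg le_Ny _.
by apply: contraNneq y_notin_a => <-; exact: mem_last.
Qed.

Lemma mp_cone_ge : (mp e).+1 <= mp (cone e).
Proof.
case: (posnP (mp e)) => [-> | /mp_attained[p dmp_p <-]].
  by apply: (dmp_size_le_mp (p := [:: None])).
wlog ge_p : p dmp_p / sorted (deg_ge e) p.
  move=> nonincr; case/and4P: (dmp_p) => _ _ _ /orP[le_p|]; last exact: nonincr.
  by rewrite -size_rev; apply: nonincr; rewrite ?(is_dmp_rev e_sym) ?rev_sorted.
by have := dmp_size_le_mp (dmp_cons_apex dmp_p ge_p); rewrite /= size_map.
Qed.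

Lemma mp_cone_le : mp (cone e) <= (mp e).+1.
Proof.
apply: mp_le_of_bound => q dmp_q.
have [q_apex | q_noapex] := boolP (None \in q); last first.
  rewrite -(map_Some_pmap q_noapex) is_dmp_cone_map in dmp_q *.
  by rewrite size_map leqW // dmp_size_le_mp.
case/splitPr: q_apex dmp_q => q1 q2.
wlog le_q : q1 q2 / sorted (deg_le (cone e)) (q1 ++ None :: q2).
  move=> nondecr dmp_q; case/and4P: (dmp_q) => _ _ _ /orP[le_q|ge_q].
    exact: nondecr le_q dmp_q.
  have rev_q : rev (q1 ++ None :: q2) = rev q2 ++ None :: rev q1.
    by rewrite rev_cat rev_cons cat_rcons.
  rewrite -size_rev rev_q; apply: nondecr; rewrite -rev_q.
    by rewrite rev_sorted; exact: ge_q.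
  by rewrite (is_dmp_rev cone_sym).
move=> dmp_q; have : uniq (q1 ++ None :: q2) by case/and4P: dmp_q.
rewrite cat_uniq /= => /and3P[_ /norP[None_q1 _] /andP[None_q2 _]].
rewrite -(map_Some_pmap None_q1) -(map_Some_pmap None_q2) in dmp_q le_q *.
rewrite size_cat /= !size_map addnS -size_cat ltnS.
have [-> // | ab_nil] := eqVneq (pmap id q1 ++ pmap id q2) [::].
exact/dmp_size_le_mp/dmp_drop_apex.
Qed.

Lemma mp_cone : mp (cone e) = (mp e).+1.
Proof. by apply/eqP; rewrite eqn_leq mp_cone_le mp_cone_ge. Qed.

End Cone.

Section AddEdge.
Variables (T : finType) (e : rel T) (x y : T).

Lemma add_edge_sym : symmetric e -> symmetric (add_edge e x y).
Proof.
move=> e_sym a b; rewrite /add_edge e_sym; congr (_ || _).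
by rewrite orbC andbC [(b == y) && _]andbC.
Qed.

Lemma add_edge_irr : irreflexive e -> x != y -> irreflexive (add_edge e x y).
Proof.
move=> e_irr neq_xy a; rewrite /add_edge e_irr /=.
by apply/norP; split; apply: contraNN neq_xy => /andP[/eqP <- /eqP <-].
Qed.

Lemma add_edge_cone : add_edge (cone e) (Some x) (Some y) = cone (add_edge e x y).
Proof.
by apply: functional_extensionality => -[a|]; apply: functional_extensionality => -[b|].
Qed.

End AddEdge.

Lemma cone_saturated (T : finType) (e : rel T) :
  symmetric e -> irreflexive e -> saturated e -> saturated (cone e).
Proof.
move=> e_sym e_irr e_sat [x|] [y|] //= neq_xy nadj_xy.
have {}neq_xy : x != y by apply: contraNneq neq_xy => ->.
rewrite add_edge_cone !mp_cone ?ltnS ?e_sat //.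
  exact: add_edge_sym.
exact: add_edge_irr.
Qed.

Theorem lemma2p6 (T : finType) (e : rel T) (k : nat) :
  symmetric e -> irreflexive e ->
  saturated e -> mp e = k ->
  mp (cone e) = k.+1 /\ saturated (cone e).
Proof.
move=> e_sym e_irr e_sat <-.
by split; [exact: mp_cone | exact: cone_saturated].
Qed.
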